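(* The function $\mathrm{gain}$, defined on collections of actively connected subsets of $V$, i.e. $\mathrm{gain}: 2^{\{S\subseteq V:\ S\text{ actively connected}\}}\to\mathbb{R}_{\ge0}$, is submodular.
   Context: Steiner Forest: finite undirected graph $G=(V,E)$, non-negative edge costs $(c_e)_{e\in E}$, set $\mathcal{D}$ of demand pairs $\{a,b\}\subseteq V$ (partners). For $U\subseteq V$, $\delta(U)$ is the set of edges with exactly one endpoint in $U$. The $\varepsilon$-extended moat-growing algorithm (fixed $\varepsilon\ge0$): time $t$ increases continuously from $0$ at unit rate; it maintains tight edges $F$ (initially empty), duals $y_S(t)\ge0$ (initially $0$), and budgets of components (initially $0$). $\mathcal{C}^t$ is the family of vertex sets of connected components of $(V,F)$. A component is demand-active if it contains a vertex not connected in $(V,F)$ to some partner; budget-active if not demand-active but with positive budget; active if either; $\mathcal{A}^t$ is the set of active components. Each $y_S$, $S\in\mathcal{A}^t$, grows at unit rate; budgets of demand-active components grow at rate $\varepsilon$ and of budget-active ones decrease at rate $1$; an edge $e$ with $\sum_{S:e\in\delta(S)}y_S(t)=c_e$ becomes tight and is added to $F$; merging components add budgets. The deactivation time $\tau_v$ of $v$ is the largest $t$ such that for all $s<t$, $v$ lies in a set of $\mathcal{A}^s$. Vertices $u,v$ are actively connected if for some $t$ they lie in a common set of $\mathcal{C}^t$ and $\tau_u,\tau_v\ge t$; this is an equivalence relation and a set is actively connected if contained in one equivalence class. For a collection $\mathcal{S}$ of actively connected sets, $\mathcal{A}^t/\mathcal{S}$ arises from $\mathcal{A}^t$ by merging sets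 of $\mathcal{A}^t$ into a single set whenever they are intersected by the same $S\in\mathcal{S}$ (transitively), and $\mathrm{gain}(\mathcal{S})=2\int_0^\infty(|\mathcal{A}^t|-|\mathcal{A}^t/\mathcal{S}|)\,dt$. *)

From HB Require Import structures.
From mathcomp Require Import all_boot all_order all_algebra.
From mathcomp Require Import all_classical all_reals all_analysis.
Set Implicit Arguments. Unset Strict Implicit. Unset Printing Implicit Defensive.
Import Order.TTheory GRing.Theory Num.Theory.
Local Open Scope ring_scope.

(* Graph G = (V, E): V a finite type, E a set of 2-element subsets of V.
   Edge costs c : {set V} -> R (only values on E matter).
   Demand pairs D : {set {set V}} (each a 2-element set {a,b}).
   A run of the algorithm is described by the functions of time
   F : R -> {set {set V}} (tight edges F at time t) and
   A : R -> {set {set V}} (the family A^t of active components). *)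

Section MoatGrowing.
Variables (R : realType) (V : finType).

Definition adj (Fs : {set {set V}}) : rel V := fun u v => [set u; v] \in Fs.

Definition comp (Fs : {set {set V}}) (v : V) : {set V} :=
  [set w | connect (adj Fs) v w].

Definition comps (Fs : {set {set V}}) : {set {set V}} :=
  [set comp Fs v | v : V].

Definition delta (E : {set {set V}}) (U : {set V}) : {set {set V}} :=
  [set e in E | #|e :&: U| == 1%N].

Definition partners (D : {set {set V}}) (u v : V) : bool := [set u; v] \in D.

Definition dactive (D : {set {set V}}) (Fs : {set {set V}}) (S : {set V}) : bool :=
  (S \in comps Fs) &&
  [exists v in S, exists w, partners D v w && ~~ connect (adj Fs) v w].

Local Notation mu := (@lebesgue_measure R).

Definition ydual (A : R -> {set {set V}}) (S : {set V}) (t : R) : \bar R :=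
  mu [set s : R | (0 <= s < t) && (S \in A s)]%classic.

Definition load (E : {set {set V}}) (A : R -> {set {set V}}) (e : {set V}) (t : R)
  : \bar R :=
  (\sum_(S : {set V} | e \in delta E S) ydual A S t)%E.

Definition dact_time D (F A : R -> {set {set V}}) (S : {set V}) (t : R) : \bar R :=
  mu [set s : R | [&& 0 <= s < t, S \in A s & dactive D (F s) S]]%classic.
Definition bact_time D (F A : R -> {set {set V}}) (S : {set V}) (t : R) : \bar R :=
  mu [set s : R | [&& 0 <= s < t, S \in A s & ~~ dactive D (F s) S]]%classic.

(* Budget of the component S at time t: budgets of demand-active components
   grow at rate eps, those of budget-active ones decrease at rate 1, and
   merging adds budgets; hence the budget of S is the sum, over all earlier
   components T contained in S, of their net budget growth. *)
Definition budget D eps (F A : R -> {set {set V}}) (S : {set V}) (t : R) : \bar R :=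
  (\sum_(T : {set V} | T \subset S)
      (eps%:E * dact_time D F A T t - bact_time D F A T t))%E.

Definition is_run (E : {set {set V}}) (c : {set V} -> R) (D : {set {set V}})
    (eps : R) (F A : R -> {set {set V}}) : Prop :=
  [/\
      (forall t, 0 <= t -> F t = [set e in E | ((c e)%:E <= load E A e t)%E]),
      (forall t, 0 <= t -> A t = [set S in comps (F t) |
                                  dactive D (F t) S || (0 < budget D eps F A S t)%E]) &
      (* finitely many events: F and A are constant between event times *)
      (exists ts : seq R, forall s t, 0 <= s <= t ->
          (forall r, r \in ts -> ~~ (s < r <= t)) -> F t = F s /\ A t = A s)].

Definition tau (A : R -> {set {set V}}) (v : V) : \bar R :=
  ereal_sup [set t%:E | t in [set t : R | 0 <= t /\
      (forall s, 0 <= s < t -> [exists S in A s, v \in S])]]%classic.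

Definition actively_connected (F A : R -> {set {set V}}) (u v : V) : Prop :=
  exists t : R, [/\ 0 <= t,
     (exists2 S, S \in comps (F t) & (u \in S) && (v \in S)),
     (t%:E <= tau A u)%E & (t%:E <= tau A v)%E].

Definition actively_connected_set (F A : R -> {set {set V}}) (S : {set V}) : Prop :=
  forall u v, u \in S -> v \in S -> actively_connected F A u v.

(* A^t / SS : merge sets of At intersected by a common S in SS, transitively *)
Definition merge_rel (SS At : {set {set V}}) : rel {set V} := fun T1 T2 =>
  [&& T1 \in At, T2 \in At &
      [exists S in SS, (S :&: T1 != finset.set0) && (S :&: T2 != finset.set0)]].

Definition quot (At SS : {set {set V}}) : {set {set V}} :=
  [set \bigcup_(T2 in At | connect (merge_rel SS At) T1 T2) T2 | T1 in At].

Definition gain (A : R -> {set {set V}}) (SS : {set {set V}}) : \bar R :=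
  (2%:E * \int[mu]_(t in [set t : R | (0 <= t)%R]%classic)
            ((#|A t|%:R - #|quot (A t) SS|%:R)%R%:E))%E.

End MoatGrowing.

From HB Require Import structures.
From mathcomp Require Import all_boot all_order all_algebra.
From mathcomp Require Import all_classical all_reals all_analysis.
From mathcomp Require Import measurable_realfun.
From mathcomp Require Import zify lra.
Import Order.TTheory GRing.Theory Num.Theory.
Set Implicit Arguments. Unset Strict Implicit. Unset Printing Implicit Defensive.

(* For each time t, |A^t/S| is the number of connected components of the
   graph on A^t in which two active sets are adjacent when some member of S
   meets both.  The edges for the union of S1 and S2 are the union of their
   edges, and the edges for the intersection are common to both.  The number
   of components is supermodular in the edge set: adding an edge ab lowers it
   by one exactly when a and b are not yet connected, which only becomes rarer
   as edges are added.  Hence |A^t| - |A^t/S| is submodular in S for each t,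
   and integrating over t gives the claim.  The run is only used through A^t
   being a set of components of (V, F^t) that is piecewise constant in t. *)

Lemma card_imset_identify (T T' : finType) (f : T -> T') (P : {set T}) u v :
  u \in P -> v \in P -> u != v -> f u = f v -> {in P :\ v &, injective f} ->
  (#|f @: P|).+1 = #|P|.
Proof.
move=> uP vP uv fuv f_inj.
have -> : f @: P = f @: (P :\ v).
  rewrite -{1}(finset.setD1K vP) imsetU1; apply/finset.setUidPr.
  by rewrite finset.sub1set -fuv; apply: imset_f; rewrite !inE uv uP.
by rewrite card_in_imset // (cardsD1 v P) vP.
Qed.

Section ComponentCount.
Variable X : finType.
Implicit Types (G B D : {set X * X}) (At : {set X}) (a b x y : X).

Definition edge_rel G : rel X := fun x y => ((x, y) \in G) || ((y, x) \in G).

Lemma connect_edge_sym G : connect_sym (edge_rel G).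
Proof. by apply: sym_connect_sym => x y; rewrite /edge_rel orbC. Qed.

Definition component G x := [set y | connect (edge_rel G) x y].

Definition ncomp At G := #|component G @: At|.

Lemma connect_edge_mono G G' : G \subset G' ->
  forall x y, connect (edge_rel G) x y -> connect (edge_rel G') x y.
Proof.
move=> sGG'; apply: connect_sub => x y /orP[] Gxy; apply: connect1;
  by rewrite /edge_rel (fintype.subsetP sGG' _ Gxy) ?orbT.
Qed.

Lemma component_eq G x y : connect (edge_rel G) x y -> component G x = component G y.
Proof.
by move=> cxy; apply/setP=> z; rewrite !inE (same_connect (connect_edge_sym G) cxy).
Qed.

Lemma connect_setU1 G a b x y :
  connect (edge_rel ((a, b) |: G)) x y =
  [|| connect (edge_rel G) x y,
      connect (edge_rel G) x a && connect (edge_rel G) b y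
    | connect (edge_rel G) x b && connect (edge_rel G) a y].
Proof.
have symG := connect_edge_sym G; set c := connect (edge_rel G).
have sG : G \subset (a, b) |: G by apply: subsetU1.
have cab : connect (edge_rel ((a, b) |: G)) a b.
  by apply: connect1; rewrite /edge_rel !inE eqxx.
apply/idP/idP; last first.
  have mono := connect_edge_mono sG.
  case/or3P=> [/mono //|/andP[xa b_y]|/andP[xb ay]].
    by apply: connect_trans (mono _ _ xa) (connect_trans cab (mono _ _ b_y)).
  apply: connect_trans (mono _ _ xb) (connect_trans _ (mono _ _ ay)).
  by rewrite connect_edge_sym.
move=> cxy; pose P := [pred z | [|| c x z, c x a && c b z | c x b && c a z]].
suff closedP : fingraph.closed (edge_rel ((a, b) |: G)) P.
  by move: (closed_connect closedP cxy); rewrite !inE /c connect0 => <-.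
have Pab : (a \in P) = (b \in P).
  have cc z : c z z by exact: connect0.
  by rewrite !inE !cc !andbT; case: (c x a); case: (c x b); rewrite /= ?orbT.
have closedG u v : edge_rel G u v -> (u \in P) = (v \in P).
  by move=> Guv; rewrite !inE /c !(same_connect_r symG (connect1 Guv)).
move=> u v; rewrite /edge_rel !in_setU1 !xpair_eqE.
case/orP=> [/orP[/andP[/eqP-> /eqP->] //|Guv]|/orP[/andP[/eqP-> /eqP->] //|Gvu]].
- by apply: closedG; rewrite /edge_rel Guv.
- by apply: closedG; rewrite /edge_rel Gvu orbT.
Qed.

Lemma mem_component_eq G x y : (y \in component G x) = (component G x == component G y).
Proof.
by apply/idP/eqP=> [|->]; [rewrite inE; apply: component_eq | rewrite inE connect0].
Qed.

Lemma ncomp_setU1_connected At G a b :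
  connect (edge_rel G) a b -> ncomp At ((a, b) |: G) = ncomp At G.
Proof.
move=> cab; rewrite /ncomp (@eq_imset _ _ _ (component G)) // => x; apply/setP=> z.
rewrite !inE connect_setU1; apply/idP/idP=> [|-> //].
have cba : connect (edge_rel G) b a by rewrite connect_edge_sym.
case/or3P=> [//|/andP[xa bz]|/andP[xb az]].
- exact: connect_trans xa (connect_trans cab bz).
- exact: connect_trans xb (connect_trans cba az).
Qed.

Lemma ncomp_setU1_disconnected At G a b : a \in At -> b \in At ->
  ~~ connect (edge_rel G) a b -> (ncomp At ((a, b) |: G)).+1 = ncomp At G.
Proof.
move=> aA bA nab; have symG := connect_edge_sym G.
set ca := component G a; set cb := component G b; set P := component G @: At.
pose glue C := if (C == ca) || (C == cb) then ca :|: cb else C.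
have glueE x : component ((a, b) |: G) x = glue (component G x).
  apply/setP=> z; rewrite /glue -!mem_component_eq !inE connect_setU1.
  have [xa|nxa] := boolP (connect _ x a);
    have [xb|nxb] := boolP (connect _ x b) => /=; rewrite !inE.
  - by case/negP: nab; apply: connect_trans xb; rewrite symG.
  - by rewrite (same_connect symG xa) orbF.
  - by rewrite (same_connect symG xb) orbC.
  - by rewrite !orbF.
have a_ca : a \in ca by rewrite inE connect0.
have b_cb : b \in cb by rewrite inE connect0.
have ca_cb : ca != cb by apply: contraNneq nab => eab; move: b_cb; rewrite -eab inE.
have glue_notin C : C \in P -> C != ca :|: cb.
  case/imsetP=> x _ ->; apply: contraNneq nab => ecx.
  have: a \in component G x by rewrite ecx inE a_ca.
  have: b \in component G x by rewrite ecx inE b_cb orbT.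
  by rewrite !inE => xb xa; apply: connect_trans xb; rewrite symG.
have glue_inj : {in P :\ cb &, injective glue}.
  move=> C C' /setD1P[/negbTE nC PC] /setD1P[/negbTE nC' PC']; rewrite /glue nC nC' !orbF.
  case: eqP => [->|_]; case: eqP => [->|_] // eC.
  - by move: (glue_notin _ PC'); rewrite -eC eqxx.
  - by move: (glue_notin _ PC); rewrite eC eqxx.
rewrite /ncomp (eq_imset _ glueE) imset_comp.
apply: (card_imset_identify (u := ca) (v := cb)) => //; try exact: imset_f.
by rewrite /glue !eqxx ?orbT.
Qed.

Lemma ncomp_setU1 At G a b : a \in At -> b \in At ->
  ncomp At ((a, b) |: G) + ~~ connect (edge_rel G) a b = ncomp At G.
Proof.
move=> aA bA; have [cab|nab] := boolP (connect _ a b).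
  by rewrite addn0 ncomp_setU1_connected.
by rewrite addn1 ncomp_setU1_disconnected.
Qed.

Lemma ncomp_supermodular At G B D : B \subset G -> D \subset finset.setX At At ->
  ncomp At G + ncomp At (B :|: D) <= ncomp At (G :|: D) + ncomp At B.
Proof.
move=> sBG; elim: {D}_.+1 {-2}D (ltnSn #|D|) => // n IH D leDn sDA.
have [->|[[a b] abD]] := set_0Vmem D; first by rewrite !finset.setU0.
have /setXP[aA bA] := fintype.subsetP sDA _ abD.
set D' := D :\ (a, b).
have ltD'n : #|D'| < n by move: leDn; rewrite (cardsD1 (a, b)) abD.
have sD'A : D' \subset finset.setX At At by apply: fintype.subset_trans sDA; apply: finset.subsetDl.
have := IH D' ltD'n sD'A.
have addD H : H :|: D = (a, b) |: (H :|: D') by rewrite finset.setUCA finset.setD1K.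
rewrite !addD.
have := ncomp_setU1 (B :|: D') aA bA; have := ncomp_setU1 (G :|: D') aA bA.
have : connect (edge_rel (B :|: D')) a b ==> connect (edge_rel (G :|: D')) a b.
  by apply/implyP; apply: connect_edge_mono; apply: finset.setSU.
by case: connect; case: connect => //= _; lia.
Qed.
End ComponentCount.

Section MergeGraph.
Variable V : finType.
Implicit Types (At SS : {set {set V}}).

Definition merge_edges At SS : {set {set V} * {set V}} :=
  [set p | merge_rel SS At p.1 p.2].

Lemma merge_rel_sym At SS : symmetric (merge_rel SS At).
Proof.
move=> T1 T2; rewrite /merge_rel andbCA; congr (_ && (_ && _)).
by apply: eq_existsb => S; rewrite [X in _ && X]andbC.
Qed.

Lemma edge_rel_merge_edges At SS : edge_rel (merge_edges At SS) =2 merge_rel SS At.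
Proof. by move=> T1 T2; rewrite /edge_rel !inE /= merge_rel_sym orbb. Qed.

Lemma merge_edges_sub At SS : merge_edges At SS \subset finset.setX At At.
Proof. by apply/fintype.subsetP=> -[T1 T2]; rewrite !inE => /and3P[-> -> _]. Qed.

Lemma merge_edgesS At SS SS' : SS \subset SS' -> merge_edges At SS \subset merge_edges At SS'.
Proof.
move=> sSS; apply/fintype.subsetP=> -[T1 T2]; rewrite !inE /merge_rel /=.
case/and3P=> -> -> /existsP[S /andP[SS_S meet]]; apply/existsP; exists S.
by rewrite (fintype.subsetP sSS).
Qed.

Lemma merge_edgesU At SS1 SS2 :
  merge_edges At (SS1 :|: SS2) = merge_edges At SS1 :|: merge_edges At SS2.
Proof.
apply/setP=> -[T1 T2]; rewrite !inE /merge_rel /=.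
case: (T1 \in At) (T2 \in At) => [] [] //=; apply/existsP/orP.
  by case=> S; rewrite inE andb_orl => /orP[] meet; [left|right]; apply/existsP; exists S.
by case=> /existsP[S meet]; exists S; rewrite inE andb_orl meet ?orbT.
Qed.

Lemma card_quot At SS : finset.set0 \notin At -> finset.trivIset At ->
  #|quot At SS| = ncomp At (merge_edges At SS).
Proof.
move=> At_ne0 At_triv; set cl := component (merge_edges At SS).
have connE := eq_connect (edge_rel_merge_edges At SS).
have closedAt : fingraph.closed (merge_rel SS At) At.
  by move=> T1 T2 /and3P[-> -> _].
have quotE : quot At SS = finset.cover @: (cl @: At).
  rewrite /quot -imset_comp; apply: eq_in_imset => T1 T1A /=.
  apply: eq_bigl => T2; rewrite inE connE.
  have [cT12|_] := boolP (connect _ T1 T2); last by rewrite andbF.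
  by rewrite -(closed_connect closedAt cT12) T1A.
rewrite quotE /ncomp (card_in_imset (f := finset.cover)) //.
move=> _ _ /imsetP[T1 T1A ->] /imsetP[T2 T2A ->] ecov.
have /finset.set0Pn[v vT1] : T1 != finset.set0 by apply: contraNneq At_ne0 => <-.
have : v \in finset.cover (cl T1) by apply/bigcupP; exists T1; rewrite // inE connect0.
rewrite ecov => /bigcupP[T]; rewrite inE => cT2T vT.
have TA : T \in At by move: cT2T; rewrite connE => /(closed_connect closedAt) <-.
have -> : T1 = T by rewrite -(def_pblock At_triv T1A vT1) (def_pblock At_triv TA vT).
exact/esym/component_eq.
Qed.

Lemma card_quot_supermodular At SS1 SS2 : finset.set0 \notin At -> finset.trivIset At ->
  #|quot At SS1| + #|quot At SS2| <= #|quot At (SS1 :|: SS2)| + #|quot At (SS1 :&: SS2)|.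
Proof.
move=> At_ne0 At_triv; rewrite !card_quot // merge_edgesU.
have sI2 : merge_edges At (SS1 :&: SS2) \subset merge_edges At SS2.
  by apply: merge_edgesS; apply: finset.subsetIr.
have := ncomp_supermodular (merge_edgesS At (finset.subsetIl SS1 SS2)) (merge_edges_sub At SS2).
by rewrite (finset.setUidPr sI2).
Qed.
End MergeGraph.

Local Open Scope ring_scope.

Section Runs.
Variable V : finType.

Lemma comps_partition (Fs : {set {set V}}) : finset.partition (comps Fs) [set: V].
Proof.
have adj_sym : connect_sym (adj Fs).
  by apply: sym_connect_sym => u v; rewrite /adj finset.setUC.
have -> : comps Fs = equivalence_partition (connect (adj Fs)) [set: V].
  apply/setP=> C; apply/imsetP/imsetP=> -[v _ ->]; exists v => //;
    by apply/setP=> w; rewrite !inE.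
apply: equivalence_partitionP => u v w _ _ _; split; first exact: connect0.
by move=> uv; exact: (same_connect adj_sym uv w).
Qed.

Lemma run_active_partition (R : realType) E (c : {set V} -> R) D eps F A t :
  is_run E c D eps F A -> 0 <= t ->
  finset.set0 \notin A t /\ finset.trivIset (A t).
Proof.
case=> _ runA _ t0; have /and3P[_ triv no0] := comps_partition (F t).
have sA : A t \subset comps (F t).
  by rewrite runA //; apply/fintype.subsetP=> S; rewrite inE => /andP[].
by split; [apply: contra no0; apply: (fintype.subsetP sA) | apply: finset.trivIsetS triv].
Qed.

End Runs.

Section StepFunctions.
Local Open Scope classical_set_scope.
Variable R : realType.
Implicit Types (ts : seq R) (s t : R).

Definition last_event ts t : R := \big[Num.max/0]_(r <- ts | r <= t) r.

Lemma last_event_ge0 ts t : 0 <= last_event ts t.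
Proof.
rewrite /last_event; elim: ts => [|r ts IH]; rewrite ?big_nil ?big_cons //.
by case: ifP => _; rewrite ?le_max ?IH ?orbT.
Qed.

Lemma last_event_le ts t : 0 <= t -> last_event ts t <= t.
Proof.
rewrite /last_event => t0; elim: ts => [|r ts IH]; rewrite ?big_nil ?big_cons //.
by case: ifP => rt; rewrite ?ge_max ?rt.
Qed.

Lemma le_last_event ts t r : r \in ts -> r <= t -> r <= last_event ts t.
Proof.
rewrite /last_event; elim: ts => [|r' ts IH] //; rewrite inE big_cons => /orP[/eqP<-|rts] rt.
  by rewrite rt le_max lexx.
by case: ifP => _; rewrite ?le_max IH ?orbT.
Qed.

Lemma last_event_mem ts t : last_event ts t \in 0 :: ts.
Proof.
rewrite /last_event; elim: ts => [|r ts IH]; rewrite ?big_nil ?big_cons ?mem_head //.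
move: IH; rewrite !inE; case: ifP => _ IH; last by case/orP: IH => ->; rewrite ?orbT.
by rewrite maxEle; case: ifP => _; [case/orP: IH => ->|]; rewrite ?eqxx ?orbT.
Qed.

Lemma last_event_nd ts : {homo last_event ts : s t / s <= t}.
Proof.
move=> s t st; rewrite /last_event; elim: ts => [|r ts IH]; rewrite ?big_nil ?big_cons //.
case: ifP => rs; first by rewrite (le_trans rs st) ge_max !le_max lexx IH !orbT.
by case: ifP => _; rewrite ?le_max IH ?orbT.
Qed.

Lemma measurable_set_ge0 : measurable [set t : R | 0 <= t].
Proof.
rewrite (_ : [set t : R | 0 <= t] = `[0, +oo[); first exact: measurable_itv.
by apply/seteqP; split=> t /=; rewrite in_itv /= andbT.
Qed.

Lemma measurable_fun_step ts (f : R -> R) :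
  (forall s t, 0 <= s <= t -> (forall r, r \in ts -> ~~ (s < r <= t)) -> f t = f s) ->
  measurable_fun [set t : R | 0 <= t] f.
Proof.
move=> f_step; have mD := measurable_set_ge0.
have fE t : 0 <= t -> f t = f (last_event ts t).
  move=> t0; apply: f_step => [|r rts]; first by rewrite last_event_ge0 last_event_le.
  by apply/negP=> /andP[lt_r le_r]; move: (le_last_event rts le_r); rewrite leNgt lt_r.
move=> _ Y _.
have -> : [set t | 0 <= t] `&` f @^-1` Y =
    [set t | 0 <= t] `&` last_event ts @^-1` [set q | q \in 0 :: ts /\ Y (f q)].
  apply/seteqP; split=> t /= [t0 Yt]; split=> //; first by rewrite last_event_mem -fE.
  by rewrite fE //; case: Yt.
apply: (nondecreasing_measurable mD (@last_event_nd ts)) => //.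
apply: countable_measurable; first exact: measurable_set1.
by apply/finite_set_countable/(sub_finite_set _ (finite_seq (0 :: ts))) => q [].
Qed.

End StepFunctions.

Section IntegralInequality.
Local Open Scope ereal_scope.
Context d (T : measurableType d) (R : realType) (mu : {measure set T -> \bar R}).

Lemma ge0_integralD_le (D : set T) (f1 f2 g1 g2 : T -> \bar R) : measurable D ->
  (forall x, D x -> 0 <= f1 x) -> (forall x, D x -> 0 <= f2 x) ->
  (forall x, D x -> 0 <= g1 x) -> (forall x, D x -> 0 <= g2 x) ->
  measurable_fun D f1 -> measurable_fun D f2 ->
  measurable_fun D g1 -> measurable_fun D g2 ->
  (forall x, D x -> f1 x + f2 x <= g1 x + g2 x) ->
  \int[mu]_(x in D) f1 x + \int[mu]_(x in D) f2 x <=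
  \int[mu]_(x in D) g1 x + \int[mu]_(x in D) g2 x.
Proof.
move=> mD f10 f20 g10 g20 mf1 mf2 mg1 mg2 le_fg.
rewrite -!ge0_integralD //; apply: ge0_le_integral => //.
- by move=> x Dx; rewrite adde_ge0 ?f10 ?f20.
- exact: emeasurable_funD.
- exact: emeasurable_funD.
Qed.

End IntegralInequality.

Theorem lemma3p5 (R : realType) (V : finType) (E : {set {set V}})
    (c : {set V} -> R) (D : {set {set V}}) (eps : R)
    (F A : R -> {set {set V}}) :
  (forall e, e \in E -> #|e| = 2%N) ->
  (forall e, e \in E -> 0 <= c e) ->
  (forall d, d \in D -> #|d| = 2%N) ->
  0 <= eps ->
  is_run E c D eps F A ->
  forall SS1 SS2 : {set {set V}},
    (forall S, S \in SS1 -> actively_connected_set F A S) ->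
    (forall S, S \in SS2 -> actively_connected_set F A S) ->
    (gain A (SS1 :|: SS2) + gain A (SS1 :&: SS2) <= gain A SS1 + gain A SS2)%E.
Proof.
move=> _ _ _ _ run SS1 SS2 _ _.
have [_ _ [ts A_step]] := run.
pose f SS t := (#|A t|%:R - #|quot (A t) SS|%:R : R)%:E.
have f_ge0 SS t : (0 <= f SS t)%E by rewrite lee_fin subr_ge0 ler_nat leq_imset_card.
have f_meas SS : measurable_fun [set t : R | 0 <= t]%classic (f SS).
  apply/measurable_EFinP; apply: (measurable_fun_step (ts := ts)) => s t st no_event.
  by have [_ ->] := A_step s t st no_event.
have int_ge0 SS : (0 <= \int[lebesgue_measure]_(t in [set t : R | (0 <= t)%R]) f SS t)%E.
  by apply: integral_ge0 => t _.
have gainE SS : gain A SS =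
    (2%:E * \int[lebesgue_measure]_(t in [set t : R | (0 <= t)%R]) f SS t)%E by [].
rewrite !gainE -!(ge0_muleDr _ (int_ge0 _) (int_ge0 _)).
rewrite lee_pmul2l; [|by []|by rewrite lte_fin].
apply: ge0_integralD_le; first exact: measurable_set_ge0.
1-4: by move=> ? _; apply: f_ge0.
1-4: exact: f_meas.
move=> t /= t0; have [no0 triv] := run_active_partition run t0.
rewrite /f -!EFinD lee_fin.
have := card_quot_supermodular SS1 SS2 no0 triv; rewrite -(ler_nat R) !natrD.
lra.
Qed.
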